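(* Let $(X,\|\cdot\|)$ be a normed linear space, let $I$ be a non-trivial admissible ideal in $\mathbb{N}$, let $x=\{x_k\}_{k\in\mathbb{N}}$ be a sequence in $X$ and let $r>0$. Then the set $I\text{-}st\text{-}\mathrm{LIM}_x^r$ is closed in $X$.
   Context: An ideal $I$ in $\mathbb{N}$ is a family of subsets of $\mathbb{N}$ containing $\emptyset$, closed under finite unions and under taking subsets; it is non-trivial if $\mathbb{N}\notin I$ and admissible if $\{n\}\in I$ for every $n$. For $r\ge0$, $x$ is $r$-$I$-statistically convergent to $\xi\in X$ if for every $\varepsilon>0$ and $\delta>0$, $\{n\in\mathbb{N}:\frac1n|\{k\le n:\|x_k-\xi\|\ge r+\varepsilon\}|\ge\delta\}\in I$; $I\text{-}st\text{-}\mathrm{LIM}_x^r$ is the set of all such $\xi$. *)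

From HB Require Import structures.
From mathcomp Require Import all_boot all_order all_algebra.
From mathcomp Require Import all_classical all_reals all_analysis.
Set Implicit Arguments. Unset Strict Implicit. Unset Printing Implicit Defensive.
Import Order.TTheory GRing.Theory Num.Theory.
Import numFieldNormedType.Exports.
Local Open Scope classical_set_scope.
Local Open Scope ring_scope.

Definition is_ideal (I : set (set nat)) : Prop :=
  I set0 /\
  (forall A B, I A -> I B -> I (A `|` B)) /\
  (forall A B, B `<=` A -> I A -> I B).

Definition nontrivial_ideal (I : set (set nat)) : Prop := ~ I setT.

Definition admissible_ideal (I : set (set nat)) : Prop :=
  forall n : nat, I [set n].

Definition stat_count {R : realType} {X : normedModType R}
  (x : nat -> X) (xi : X) (r eps : R) (n : nat) : nat :=
  #|[set k : 'I_n.+1 | (0 < val k)%N && (r + eps <= `|x k - xi|) ]|.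

Definition rI_stat_conv {R : realType} {X : normedModType R}
  (I : set (set nat)) (x : nat -> X) (r : R) (xi : X) : Prop :=
  forall eps delta : R, 0 < eps -> 0 < delta ->
    I [set n : nat | (0 < n)%N /\
        delta <= (n%:R)^-1 * (stat_count x xi r eps n)%:R].

Definition I_st_LIM {R : realType} {X : normedModType R}
  (I : set (set nat)) (x : nat -> X) (r : R) : set X :=
  [set xi | rI_stat_conv I x r xi].

From HB Require Import structures.
From mathcomp Require Import all_boot all_order all_algebra.
From mathcomp Require Import all_classical all_reals all_analysis.
Import Order.TTheory GRing.Theory Num.Theory.
Import numFieldNormedType.Exports.
Local Open Scope classical_set_scope.
Local Open Scope ring_scope.

(* If |xi - y| <= d, the triangle inequality shows that every index where x is
   (r + eps + d)-far from y is one where x is (r + eps)-far from xi, so the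
   exceptional index sets of y at tolerance eps + d lie inside those of xi at
   tolerance eps.  A limit point y of I-st-LIM_x^r is within eps/2 of some xi in
   it, and since I is closed under subsets this gives y in I-st-LIM_x^r. *)

Definition stat_exceptional {R : realType} {X : normedModType R}
  (x : nat -> X) (xi : X) (r eps delta : R) : set nat :=
  [set n : nat | (0 < n)%N /\ delta <= (n%:R)^-1 * (stat_count x xi r eps n)%:R].

Section ShiftCentre.
Variables (R : realType) (X : normedModType R) (x : nat -> X) (r : R).

Lemma stat_count_shift (xi y : X) (eps d : R) (n : nat) :
  `|xi - y| <= d -> (stat_count x y r (eps + d) n <= stat_count x xi r eps n)%N.
Proof.
move=> dxy; apply: subset_leq_card; apply/fintype.subsetP => k.
rewrite !inE => /andP[k0 far_y]; apply/andP; split=> //.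
have tri : `|x k - y| <= `|x k - xi| + d.
  by rewrite -(subrKA xi); apply: (le_trans (ler_normD _ _)); rewrite lerD2l.
by rewrite -(lerD2r d) -addrA; apply: le_trans tri.
Qed.

Lemma stat_exceptional_shift (xi y : X) (eps d delta : R) :
  `|xi - y| <= d ->
  stat_exceptional x y r (eps + d) delta `<=` stat_exceptional x xi r eps delta.
Proof.
move=> dxy n [n0 big_y]; split=> //; apply: (le_trans big_y).
rewrite ler_wpM2l ?invr_ge0 ?ler0n // ler_nat; exact: stat_count_shift.
Qed.

End ShiftCentre.

Theorem theorem3p3 (R : realType) (X : normedModType R)
  (I : set (set nat)) (x : nat -> X) (r : R) :
  is_ideal I -> nontrivial_ideal I -> admissible_ideal I -> 0 < r ->
  closed (I_st_LIM I x r).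
Proof.
move=> [_ [_ I_sub]] _ _ _ y cl_y eps delta eps0 delta0.
have eps20 : 0 < eps / 2 by rewrite divr_gt0.
have [xi [xi_lim]] := cl_y _ (nbhsx_ballx y (eps / 2) eps20).
rewrite -ball_normE /= distrC => /ltW xi_near.
apply: I_sub (xi_lim _ _ eps20 delta0).
by rewrite {1}(splitr eps); exact: stat_exceptional_shift.
Qed.
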